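(* Let $\beta\subset\mathcal B$. If $\beta$ is not extremal successor closed, then the $\beta$-state is contradictory, i.e. $\mathrm{Ev}(f_\beta)=\emptyset$.
   Context: Let $Q$ be a quiver with finite vertex and arrow sets $Q_0,Q_1$, $M$ a finite-dimensional complex representation, and $\mathcal B=\bigcup_p\mathcal B_p$ an ordered basis ($\mathcal B_p$ a basis of $M_p$, with a total order on $\mathcal B$). For $v:p\to q$, $i\in\mathcal B_p$ write $M_v(i)=\sum_{j\in\mathcal B_q}\mu_{v,i,j}j$. The coefficient quiver $\Gamma$ has vertices $\mathcal B$ and arrows $(v,i,j)$ ($i\in\mathcal B_p$, $j\in\mathcal B_q$, $\mu_{v,i,j}\ne0$); $F:\Gamma\to Q$ is the natural map. An arrow $(v,s,t)$ of $\Gamma$ is extremal if for all arrows $(v,s',t')\in\Gamma_1$ different from $(v,s,t)$ either $s<s'$ or $t'<t$. A subset $\beta\subset\mathcal B$ is extremal successor closed if for every extremal arrow $(v,s,t)$, $s\in\beta$ implies $t\in\beta$. For $v:p\to q$, $s\in F^{-1}(p)$, $t\in F^{-1}(q)$ let $E(v,t,s)=\sum_{(v,s',t')\in\Gamma_1}\mu_{v,s',t'}w_{t,t'}w_{s',s}-\sum_{(v,s',t)\in\Gamma_1}\mu_{v,s',t}w_{s',s}$ in variables $w_{i,j}$. $\mathrm{Rel}^2=\{(i,j):F(i)=F(j),i\le j\}$; $\mathrm{Rel}^3$ is the set of such $(v,t,s)$ for which some $(v,s',t')\in\Gamma_1$ has $s\ge s'$, $t\le t'$; $E(v,t,s)$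 is regarded as a polynomial in $w_{i,j}$, $(i,j)\in\mathrm{Rel}^2$ (other variables set to $0$). The Schubert system $\Sigma$ is the graph on $\mathrm{Rel}^2\sqcup\mathrm{Rel}^3$ with an edge $\{(i,j),(v,t,s)\}$ iff $w_{i,j}$ occurs in $E(v,t,s)$, with links $\lambda=((v,t,s),S)$, $S\subset\mathrm{Rel}^2$, whenever the monomial $\prod_{(i,j)\in S}w_{i,j}$ occurs in $E(v,t,s)$ with nonzero coefficient $\mu_\lambda$. A partial evaluation is a partial function $\mathrm{ev}:\mathrm{Rel}^2\dashrightarrow\mathbb C$ such that for every $(v,t,s)\in\mathrm{Rel}^3$ and neighbour $(k,l)$: if all other neighbours of $(v,t,s)$ are in the domain, then $(k,l)$ is in the domain and $\sum_{\lambda=((v,t,s),S)}\mu_\lambda\prod_{(i,j)\in S}\mathrm{ev}(i,j)=0$. $f_\beta$ is the partial function with $f_\beta(i,j)=1$ if $i=j\in\beta$, $0$ if $i\in\beta$, $i\neq j$, $0$ if $j\notin\beta$, undefined otherwise; $\mathrm{Ev}(f_\beta)$ is the set of partial evaluations extending $f_\beta$. *)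

From HB Require Import structures.
From mathcomp Require Import all_boot all_algebra.
From mathcomp Require Import complex Rstruct.
From mathcomp Require Import mpoly.

Set Implicit Arguments.
Unset Strict Implicit.
Unset Printing Implicit Defensive.

Import GRing.Theory.
Local Open Scope ring_scope.

Definition CC : fieldType := (Rdefinitions.R)[i]%C.

Section CoefficientQuiver.

Variables (Q0 Q1 : finType) (src tgt : Q1 -> Q0).
(* The ordered basis B = 'I_n (ordered by the natural order on indices);
   F i = the vertex p with i \in B_p. *)
Variables (n : nat) (F : 'I_n -> Q0).
(* The representation M in the basis: M_v(i) = \sum_(j in B_(tgt v)) mu v i j * j
   for i in B_(src v) (entries with F i <> src v or F j <> tgt v are ignored). *)
Variable mu : Q1 -> 'I_n -> 'I_n -> CC.

Definition gamma_arrow (v : Q1) (i j : 'I_n) : bool :=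
  [&& F i == src v, F j == tgt v & mu v i j != 0].

Definition extremal (v : Q1) (s t : 'I_n) : bool :=
  gamma_arrow v s t &&
  [forall s' : 'I_n, forall t' : 'I_n,
     (gamma_arrow v s' t' && ((s', t') != (s, t))) ==> ((s < s')%N || (t' < t)%N)].

Definition ext_succ_closed (beta : {set 'I_n}) : Prop :=
  forall v s t, extremal v s t -> s \in beta -> t \in beta.

Definition rel2 (i j : 'I_n) : bool := (F i == F j) && (i <= j)%N.

Definition rel3 (v : Q1) (t s : 'I_n) : bool :=
  [&& F s == src v, F t == tgt v &
      [exists s' : 'I_n, exists t' : 'I_n,
         [&& gamma_arrow v s' t', (s' <= s)%N & (t <= t')%N]]].

Definition NV := #|{: 'I_n * 'I_n}|.
Definition var (i j : 'I_n) : 'I_NV := enum_rank (i, j).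

(* w_{i,j}, with the variables outside Rel^2 set to 0 *)
Definition w (i j : 'I_n) : {mpoly CC[NV]} :=
  if rel2 i j then 'X_(var i j) else 0.

Definition Epoly (v : Q1) (t s : 'I_n) : {mpoly CC[NV]} :=
  \sum_(s' : 'I_n) \sum_(t' : 'I_n | gamma_arrow v s' t')
      mu v s' t' *: (w t t' * w s' s)
  - \sum_(s' : 'I_n | gamma_arrow v s' t) mu v s' t *: w s' s.

Definition neighbour (v : Q1) (t s : 'I_n) (i j : 'I_n) : bool :=
  rel2 i j && has (fun m : 'X_{1..NV} => (0 < m (var i j))%N) (msupp (Epoly v t s)).

(* partial functions Rel^2 -->  C, as option-valued functions vanishing off Rel^2 *)
Definition pfun := 'I_n -> 'I_n -> option CC.

Definition in_dom (ev : pfun) (i j : 'I_n) : bool := ev i j.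

(* value of sum_{lambda = ((v,t,s),S)} mu_lambda prod_{(i,j) in S} ev(i,j):
   evaluation of E(v,t,s) at ev (only used when all variables of E(v,t,s)
   lie in the domain of ev) *)
Definition eval_E (ev : pfun) (v : Q1) (t s : 'I_n) : CC :=
  (Epoly v t s).@[fun x : 'I_NV =>
     let ij := enum_val x in odflt 0 (ev ij.1 ij.2)].

Definition partial_evaluation (ev : pfun) : Prop :=
  (forall i j, ~~ rel2 i j -> ev i j = None) /\
  (forall v t s, rel3 v t s -> forall k l, neighbour v t s k l ->
     (forall i j, neighbour v t s i j -> (i, j) != (k, l) -> in_dom ev i j) ->
     in_dom ev k l /\ eval_E ev v t s = 0).

Definition f_beta (beta : {set 'I_n}) : pfun := fun i j =>
  if ~~ rel2 i j then None
  else if (i == j) && (i \in beta) then Some 1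
  else if (i \in beta) && (i != j) then Some 0
  else if j \notin beta then Some 0
  else None.

Definition extends (ev f : pfun) : Prop :=
  forall i j c, f i j = Some c -> ev i j = Some c.

Definition Ev (f : pfun) : pfun -> Prop :=
  fun ev => partial_evaluation ev /\ extends ev f.

End CoefficientQuiver.

(* An extremal arrow (v, s, t) with s in beta and t outside beta makes E(v, t, s)
   collapse to mu (w_tt w_ss - w_ss): for any other arrow (v, s', t'),
   extremality gives s < s' or t' < t, so one of w_{s',s}, w_{t,t'} lies outside
   Rel^2 and vanishes.  The beta-state fixes w_ss = 1 and w_tt = 0, so (t, t) is
   in the domain and the relation E(v, t, s) = 0 would have to hold at
   (w_ss, w_tt) = (1, 0), where it equals -mu(v, s, t) <> 0. *)
From HB Require Import structures.
From mathcomp Require Import all_boot all_algebra.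
From mathcomp Require Import complex Rstruct.
From mathcomp Require Import mpoly.

Set Implicit Arguments.
Unset Strict Implicit.
Unset Printing Implicit Defensive.
Import GRing.Theory.
Local Open Scope ring_scope.

Lemma mem_msupp_scale_XB (R : idomainType) (k : nat) (c : R) (m1 m2 m : 'X_{1..k}) :
  c != 0 -> m1 != m2 ->
  (m \in msupp (c *: ('X_[m1] - 'X_[m2]))) = (m == m1) || (m == m2).
Proof.
move=> c_neq0 m12; rewrite mcoeff_msupp mcoeffZ mcoeffB !mcoeffX mulf_eq0 negb_or c_neq0 /=.
have [<-|m1m] := eqVneq m1 m; first by rewrite [m2 == _]eq_sym (negbTE m12) subr0 oner_eq0.
rewrite [m2 == m]eq_sym; case: (m == m2); first by rewrite sub0r oppr_eq0 oner_eq0.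
by rewrite subrr eqxx.
Qed.

Section ExtremalArrow.

Variables (Q0 Q1 : finType) (src tgt : Q1 -> Q0) (n : nat) (F : 'I_n -> Q0).
Variable mu : Q1 -> 'I_n -> 'I_n -> CC.

Local Notation gamma_arrow := (gamma_arrow src tgt F mu).
Local Notation extremal := (extremal src tgt F mu).
Local Notation Epoly := (Epoly src tgt F mu).
Local Notation neighbour := (neighbour src tgt F mu).
Local Notation w := (w F).

Lemma not_ext_succ_closedP (beta : {set 'I_n}) :
  ~ ext_succ_closed src tgt F mu beta ->
  exists v s t, [/\ extremal v s t, s \in beta & t \notin beta].
Proof.
move=> not_closed.
have [/existsP[v /existsP[s /existsP[t /and3P[ext_vst s_in t_out]]]]|no_exit] :=
  boolP [exists v, exists s, exists t, [&& extremal v s t, s \in beta & t \notin beta]].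
  by exists v, s, t.
case: not_closed => v s t ext_vst s_in; apply: contraNT no_exit => t_out.
by apply/existsP; exists v; apply/existsP; exists s; apply/existsP; exists t; rewrite ext_vst s_in.
Qed.

Lemma w_diag (i : 'I_n) : w i i = 'X_(var i i).
Proof. by rewrite /w /rel2 eqxx leqnn. Qed.

Lemma w_gt (i j : 'I_n) : (j < i)%N -> w i j = 0.
Proof. by move=> lt_ji; rewrite /w /rel2 leqNgt lt_ji andbF. Qed.

Lemma extremal_arrow (v : Q1) (s t : 'I_n) : extremal v s t -> gamma_arrow v s t.
Proof. by case/andP. Qed.

Lemma extremal_other (v : Q1) (s t s' t' : 'I_n) :
  extremal v s t -> gamma_arrow v s' t' -> (s', t') != (s, t) -> (s < s')%N || (t' < t)%N.
Proof.
case/andP=> _ /forallP /(_ s') /forallP /(_ t') other arr' neq.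
by move: other; rewrite arr' neq.
Qed.

Lemma rel3_arrow (v : Q1) (s t : 'I_n) : gamma_arrow v s t -> rel3 src tgt F mu v t s.
Proof.
move=> arr; have /and3P[Fs Ft _] := arr; rewrite /rel3 Fs Ft /=.
by apply/existsP; exists s; apply/existsP; exists t; rewrite arr !leqnn.
Qed.

Lemma Epoly_extremal (v : Q1) (s t : 'I_n) :
  extremal v s t -> Epoly v t s = mu v s t *: (w t t * w s s - w s s).
Proof.
move=> ext; have arr := extremal_arrow ext.
rewrite /Epoly scalerBr (bigD1 s) //= (bigD1 t) //= big1 => [|t' /andP[arr' t't]]; last first.
  have := extremal_other ext arr'; rewrite xpair_eqE eqxx t't ltnn.
  by move=> /(_ isT) /w_gt ->; rewrite mul0r scaler0.
rewrite addr0 big1 => [|s' s's]; last first.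
  apply: big1 => t' arr'; have := extremal_other ext arr'; rewrite xpair_eqE (negbTE s's).
  by case/(_ isT)/orP => [/w_gt -> | /w_gt ->]; rewrite ?mulr0 ?mul0r scaler0.
rewrite addr0 (bigD1 s) //= big1 ?addr0 // => s' /andP[arr' s's].
have := extremal_other ext arr'; rewrite xpair_eqE (negbTE s's) ltnn orbF.
by move=> /(_ isT) /w_gt ->; rewrite scaler0.
Qed.

Lemma neighbour_extremal (v : Q1) (s t i j : 'I_n) :
  extremal v s t -> neighbour v t s i j = ((i, j) == (s, s)) || ((i, j) == (t, t)).
Proof.
move=> ext; have /and3P[_ _ mu_neq0] := extremal_arrow ext.
have XD_neqX : (U_(var t t) + U_(var s s) != U_(var s s))%MM.
  apply/eqP => /(congr1 (fun m : 'X_{1..NV n} => m (var t t))).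
  by rewrite mnmDE !mnm1E eqxx; case: (_ == _).
have var_eq (k : 'I_n) : (var k k == var i j) = ((i, j) == (k, k)).
  by rewrite eq_sym (inj_eq enum_rank_inj).
rewrite /neighbour Epoly_extremal // !w_diag -mpolyXD.
apply/andP/idP => [[_ /hasP[m]]|ij_diag].
  rewrite mem_msupp_scale_XB // => /orP[] /eqP ->; rewrite ?mnmDE !mnm1E -!var_eq.
    by case: (_ == _); case: (_ == _).
  by case: (_ == _); rewrite ?orbT.
split; first by case/orP: ij_diag => /eqP[-> ->]; rewrite /rel2 eqxx leqnn.
apply/hasP; exists (U_(var t t) + U_(var s s))%MM.
  by rewrite mem_msupp_scale_XB // eqxx.
by rewrite mnmDE !mnm1E !var_eq addn_gt0 !lt0b orbC.
Qed.

Lemma eval_E_extremal (ev : pfun n) (v : Q1) (s t : 'I_n) :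
  extremal v s t ->
  eval_E src tgt F mu ev v t s
  = mu v s t * (odflt 0 (ev t t) * odflt 0 (ev s s) - odflt 0 (ev s s)).
Proof.
move=> ext; rewrite /eval_E Epoly_extremal // !w_diag mevalZ mevalB mevalM !mevalXU.
by rewrite /var !enum_rankK.
Qed.

End ExtremalArrow.

Lemma f_beta_diag_in (n : nat) (Q0 : finType) (F : 'I_n -> Q0) (beta : {set 'I_n}) i :
  i \in beta -> f_beta F beta i i = Some 1.
Proof. by move=> i_in; rewrite /f_beta /rel2 !eqxx leqnn /= i_in. Qed.

Lemma f_beta_diag_notin (n : nat) (Q0 : finType) (F : 'I_n -> Q0) (beta : {set 'I_n}) i :
  i \notin beta -> f_beta F beta i i = Some 0.
Proof. by move=> i_out; rewrite /f_beta /rel2 !eqxx leqnn /= (negbTE i_out). Qed.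

Theorem lemma2p8 (Q0 Q1 : finType) (src tgt : Q1 -> Q0) (n : nat)
    (F : 'I_n -> Q0) (mu : Q1 -> 'I_n -> 'I_n -> CC) (beta : {set 'I_n}) :
  ~ ext_succ_closed src tgt F mu beta ->
  forall ev : pfun n, ~ Ev src tgt F mu (f_beta F beta) ev.
Proof.
move=> /not_ext_succ_closedP[v [s [t [ext s_in t_out]]]] ev [[_ ev_pe] ev_ext].
have ev_ss : ev s s = Some 1 by apply/ev_ext/f_beta_diag_in.
have ev_tt : ev t t = Some 0 by apply/ev_ext/f_beta_diag_notin.
have nb_ss : neighbour src tgt F mu v t s s s by rewrite neighbour_extremal ?eqxx.
have [|_] := ev_pe v t s (rel3_arrow (extremal_arrow ext)) s s nb_ss.
  move=> i j; rewrite neighbour_extremal // => /orP[->//|/eqP[-> ->] _].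
  by rewrite /in_dom ev_tt.
have /and3P[_ _ mu_neq0] := extremal_arrow ext.
rewrite eval_E_extremal // ev_ss ev_tt /= mul0r sub0r mulrN1 => /eqP.
by rewrite oppr_eq0 (negbTE mu_neq0).
Qed.
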